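(* Let $k\geq 1$ and $K=J(2k+1,4)$, with Riley polynomial $\phi_K(x,y)=\lambda_k(x,y)\,\alpha_k(x,y)-1$ for the presentation $\langle a,b\mid w^2a=bw^2\rangle$, $w=(ba^{-1})^kba(b^{-1}a)^k$. Then for every $n\geq 5$, the polynomial $\phi_K(2\cos(\pi/n),y)$ has a real root $y_n>2$.
   Context: $S_n$ are the Chebyshev polynomials $S_0=1$, $S_1=z$, $S_{n+1}=zS_n-S_{n-1}$. $\lambda_k(x,y)=x^2-y-(y-2)(y+2-x^2)S_k(y)S_{k-1}(y)$ and $\alpha_k(x,y)=1+(y+2-x^2)S_{k-1}(y)\big(S_k(y)-S_{k-1}(y)\big)$. *)

From Stdlib Require Import Reals.
Open Scope R_scope.

Fixpoint chebS (n : nat) (z : R) : R :=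
  match n with
  | O => 1
  | S O => z
  | S ((S m) as p) => z * chebS p z - chebS m z
  end.

Definition lambdaK (k : nat) (x y : R) : R :=
  x ^ 2 - y - (y - 2) * (y + 2 - x ^ 2) * chebS k y * chebS (k - 1) y.

Definition alphaK (k : nat) (x y : R) : R :=
  1 + (y + 2 - x ^ 2) * chebS (k - 1) y * (chebS k y - chebS (k - 1) y).

Definition rileyJ (k : nat) (x y : R) : R :=
  lambdaK k x y * alphaK k x y - 1.

(* At y = 2 the Chebyshev values are S_m(2) = m + 1, so with t = x^2 - 2 the
   Riley polynomial equals t (1 + k (2 - t)) - 1, which is positive as soon as
   t^2 - 3 t + 1 < 0; for x = 2 cos(pi/n), n >= 5, one has 1/2 <= t < 2 by the
   Taylor bounds for cos at pi/n <= pi/5 < 16/25.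
   For y >= max(2, x^2) the Chebyshev values are >= 1 and nondecreasing in the
   index, which makes lambda_k <= x^2 - y <= 0 and alpha_k >= 1, so the Riley
   polynomial is negative.  The intermediate value theorem on [2, 4] gives the
   root. *)
From Stdlib Require Import Reals Lra Lia.
Open Scope R_scope.

Lemma cos_quadratic_bounds (a : R) :
  - PI / 2 <= a -> a <= PI / 2 -> 1 - a ^ 2 / 2 <= cos a <= 1 - a ^ 2 / 2 + a ^ 4 / 24.
Proof.
  intros ha1 ha2.
  assert (approx1 : cos_approx a 1 = 1 - a ^ 2 / 2)
    by (unfold cos_approx, cos_term; simpl; field).
  assert (approx2 : cos_approx a 2 = 1 - a ^ 2 / 2 + a ^ 4 / 24)
    by (unfold cos_approx, cos_term; simpl; field).
  pose proof (cos_bound a 0 ha1 ha2) as bounds.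
  change (2 * 0 + 1)%nat with 1%nat in bounds; change (2 * (0 + 1))%nat with 2%nat in bounds.
  rewrite approx1, approx2 in bounds. exact bounds.
Qed.

Lemma PI_lt_16_5 : PI < 16 / 5.
Proof.
  destruct (Rlt_or_le PI (16 / 5)) as [lt_PI | ge_PI]; [exact lt_PI |].
  assert (cos_nonneg : 0 <= cos (8 / 5)) by (apply cos_ge_0; lra).
  destruct (cos_quadratic_bounds (8 / 5)) as [_ cos_ub]; lra.
Qed.

Lemma two_cos_PI_div_sq_bounds (n : nat) :
  (5 <= n)%nat -> 5 / 2 <= (2 * cos (PI / INR n)) ^ 2 < 4.
Proof.
  intro hn.
  assert (hn5 : 5 <= INR n) by (replace 5 with (INR 5) by (simpl; lra); apply le_INR, hn).
  assert (hPI := PI_lt_16_5). assert (hPI2 := PI2_1).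
  set (a := PI / INR n).
  assert (a_pos : 0 < a) by (apply Rdiv_lt_0_compat; lra).
  assert (a_le : a <= 16 / 25).
  { apply Rle_trans with (PI / 5); [| lra].
    apply Rmult_le_compat_l; [lra | apply Rinv_le_contravar; lra]. }
  destruct (cos_quadratic_bounds a) as [cos_lb cos_ub]; [lra | lra |].
  assert (a_sq : a ^ 2 <= (16 / 25) ^ 2) by (apply pow_incr; lra).
  assert (a_sq_pos : 0 < a ^ 2) by (apply pow_lt, a_pos).
  assert (cos_lt_1 : cos a < 1) by (simpl in *; nra).
  assert (cos_ge : 497 / 625 <= cos a) by lra.
  simpl. nra.
Qed.

Lemma chebS_SS (m : nat) (z : R) :
  chebS (S (S m)) z = z * chebS (S m) z - chebS m z.
Proof. reflexivity. Qed.

Lemma continuity_chebS (n : nat) : continuity (chebS n).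
Proof.
  enough (H : continuity (chebS n) /\ continuity (chebS (S n))) by apply H.
  induction n as [| n [IH IHS]].
  - split; [apply continuity_const; intros ? ? | apply derivable_continuous, derivable_id].
    reflexivity.
  - split; [exact IHS |].
    change (continuity (fun z => z * chebS (S n) z - chebS n z)).
    apply continuity_minus; [apply continuity_mult |]; auto.
    apply derivable_continuous, derivable_id.
Qed.

Lemma chebS_two (n : nat) : chebS n 2 = INR n + 1.
Proof.
  enough (H : chebS n 2 = INR n + 1 /\ chebS (S n) 2 = INR (S n) + 1) by apply H.
  induction n as [| n [IH IHS]].
  - simpl. lra.
  - split; [exact IHS |].
    rewrite chebS_SS, IH, IHS, !S_INR. lra.
Qed.

Lemma chebS_ge_1_le_succ (n : nat) (y : R) :
  2 <= y -> 1 <= chebS n y /\ chebS n y <= chebS (S n) y.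
Proof.
  intro hy. induction n as [| n [IH1 IH2]].
  - simpl. lra.
  - split; [lra |]. rewrite chebS_SS. nra.
Qed.

Lemma chebS_pred_le (k : nat) (y : R) : 2 <= y -> chebS (k - 1) y <= chebS k y.
Proof.
  intro hy. destruct k as [| j]; [apply Rle_refl |].
  replace (S j - 1)%nat with j by lia. apply chebS_ge_1_le_succ, hy.
Qed.

Lemma continuity_rileyJ (k : nat) (x : R) : continuity (rileyJ k x).
Proof.
  assert (hS := continuity_chebS k). assert (hP := continuity_chebS (k - 1)).
  unfold rileyJ, lambdaK, alphaK.
  repeat first [ apply continuity_mult | apply continuity_minus | apply continuity_plus
               | apply derivable_continuous, derivable_id | assumption
               | apply continuity_const; intros ? ?; reflexivity ].
Qed.

Lemma rileyJ_two (k : nat) (x : R) : (1 <= k)%nat ->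
  rileyJ k x 2 = (x ^ 2 - 2) * (1 + INR k * (4 - x ^ 2)) - 1.
Proof.
  intro hk. unfold rileyJ, lambdaK, alphaK.
  rewrite !chebS_two, minus_INR by exact hk. simpl. ring.
Qed.

Lemma rileyJ_two_pos (k : nat) (x : R) :
  (1 <= k)%nat -> 5 / 2 <= x ^ 2 < 4 -> 0 < rileyJ k x 2.
Proof.
  intros hk hx. rewrite rileyJ_two by exact hk.
  assert (hk1 : 1 <= INR k) by (replace 1 with (INR 1) by reflexivity; apply le_INR, hk).
  assert (0 <= (INR k - 1) * ((x ^ 2 - 2) * (4 - x ^ 2))) by (apply Rmult_le_pos; nra).
  assert ((x ^ 2 - 5 / 2) * (x ^ 2 - 9 / 2) <= 0) by nra.
  nra.
Qed.

Lemma rileyJ_neg (k : nat) (x y : R) : 2 <= y -> x ^ 2 <= y -> rileyJ k x y < 0.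
Proof.
  intros hy hxy.
  destruct (chebS_ge_1_le_succ (k - 1) y hy) as [hP _].
  assert (hle := chebS_pred_le k y hy).
  assert (lambda_np : lambdaK k x y <= 0).
  { unfold lambdaK.
    assert (0 <= (y - 2) * (y + 2 - x ^ 2) * chebS k y * chebS (k - 1) y)
      by (repeat apply Rmult_le_pos; lra).
    lra. }
  assert (alpha_ge_1 : 1 <= alphaK k x y).
  { unfold alphaK.
    assert (0 <= (y + 2 - x ^ 2) * chebS (k - 1) y * (chebS k y - chebS (k - 1) y))
      by (repeat apply Rmult_le_pos; lra).
    lra. }
  unfold rileyJ. nra.
Qed.

Lemma rileyJ_root_gt_two (k : nat) (x : R) :
  (1 <= k)%nat -> 5 / 2 <= x ^ 2 < 4 -> exists y, 2 < y /\ rileyJ k x y = 0.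
Proof.
  intros hk hx.
  assert (at2 := rileyJ_two_pos k x hk hx).
  assert (at4 := rileyJ_neg k x 4 ltac:(lra) ltac:(lra)).
  destruct (IVT_cor (rileyJ k x) 2 4 (continuity_rileyJ k x) ltac:(lra) ltac:(nra))
    as [y [[hy2 _] hy]].
  exists y. split; [| exact hy].
  destruct (Req_dec y 2) as [-> | ne]; lra.
Qed.

Theorem proposition5p2 (k n : nat) (hk : (1 <= k)%nat) (hn : (5 <= n)%nat) :
  exists y : R, 2 < y /\ rileyJ k (2 * cos (PI / INR n)) y = 0.
Proof.
  apply rileyJ_root_gt_two; [exact hk |].
  apply two_cos_PI_div_sq_bounds, hn.
Qed.
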